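(* The complex $$\cdots\xrightarrow{Q}\mathcal{D}\otimes H^\ast_{-5}\xrightarrow{Q}\mathcal{D}\otimes H^\ast_{-3}\xrightarrow{Q}\mathcal{D}\otimes H^\ast_{-1}\to0$$ is exact at $\mathcal{D}\otimes H^\ast_{-2n-1}$ for every $n\ge1$; that is, the kernel of $Q:\mathcal{D}\otimes H^\ast_{-2n-1}\to\mathcal{D}\otimes H^\ast_{-2n+1}$ equals $Q(\mathcal{D}\otimes H^\ast_{-2n-3})$.
   Context: $\mathcal{D}=\mathbb{C}[\partial_1,\partial_3,\partial_5,\ldots]$ is a polynomial ring in commuting variables $\partial_{2n-1}$, $n\ge1$. Fermions $\psi_n,\psi^\ast_n$ ($n\in2\mathbb{Z}+1$) satisfy $[\psi_m,\psi_n]_+=[\psi^\ast_m,\psi^\ast_n]_+=0$, $[\psi^\ast_m,\psi_n]_+=\delta_{mn}$. For odd $m$ the bra vacuum $\langle m|$ satisfies $\langle m|\psi_n=0$ ($n\le m$), $\langle m|\psi^\ast_n=0$ ($n>m$), $\langle m-2|\psi_m=\langle m|$; $H^\ast_m$ is the Fock space of bra vectors obtained from $\langle m|$ by right multiplication with products having equal numbers of $\psi$'s and $\psi^\ast$'s. $Q:\mathcal{D}\otimes H^\ast_m\to\mathcal{D}\otimes H^\ast_{m+2}$ is $Q(P\otimes v)=\sum_{n\ge1}\partial_{2n-1}P\otimes v\,\psi_{-(2n-1)}$; $Q^2=0$. *)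

From HB Require Import structures.
From mathcomp Require Import all_boot all_order all_algebra.
From mathcomp Require Import finmap multiset.
From mathcomp Require Import monalg.
From mathcomp Require Import complex reals.
Set Implicit Arguments. Unset Strict Implicit. Unset Printing Implicit Defensive.
Import Order.TTheory GRing.Theory Num.Theory.
Local Open Scope fset_scope.
Local Open Scope ring_scope.

(* Odd integers are indexed by j : int, standing for 2j+1.
   A bra basis vector <S| of the (charged) fermionic Fock space is given by a
   set S of odd integers differing from the Dirac sea S_{-1} = {n <= -1}
   by finitely many elements; we store the finite set
   T = S (symmetric difference) S_{-1}  (in the j-indexing). *)
Definition state := {fset int}.

Definition occupied (T : state) (j : int) : bool := (j \in T) (+) (j < 0).

Definition toggle (T : state) (j : int) : state :=
  if j \in T then T `\ j else j |` T.

(* number of elements s of S with s > 2j+1 (finite) *)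
Definition occ_above (T : state) (j : int) : nat :=
  (#|` [fset x in T | ((j < x) && (0 <= x))%R]|
   + (if (j < 0)%R then count (fun i : nat => occupied T (j + 1 + i%:Z)%R)
                          (iota 0 `|(j + 1)%R|%N) else 0))%N.

(* charge: <S| lies in H^*_m  iff  m = 2 * charge T - 1
   (<m| has S = {n odd, n <= m}). *)
Definition charge (T : state) : int :=
  (#|` [fset x in T | (0 <= x)%R]|%:Z - #|` [fset x in T | (x < 0)%R]|%:Z).

(* A monomial of D = C[d_1, d_3, d_5, ...] is a finite multiset of
   variable indices, k standing for d_{2k+1}. *)
Definition basis := ({mset nat}%mset * state)%type.
Definition DH (C : nzRingType) := {malg C[basis]}.

Section Ops.
Variable C : nzRingType.

Definition in_sector (m : int) (x : DH C) : Prop :=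
  forall b, b \in msupp x -> 2 * charge b.2 - 1 = m.

(* right action of psi_{2j+1} on bras:
   <S| psi_n = (-1)^#{s in S, s > n} <S u {n}|  if n \notin S, 0 otherwise *)
Definition psi (j : int) (x : DH C) : DH C :=
  \sum_(b <- msupp x)
     (if occupied b.2 j then 0
      else << ((-1) ^+ occ_above b.2 j * x@_b) *g (b.1, toggle b.2 j) >>).

Definition dmul (k : nat) (x : DH C) : DH C :=
  \sum_(b <- msupp x) << x@_b *g ((k +` b.1)%mset, b.2) >>.

(* Q (P (x) v) = sum_{n>=1} d_{2n-1} P (x) v psi_{-(2n-1)}.
   With j = -n (i.e. 2j+1 = -(2n-1)) and variable index k = n-1 = |j+1|;
   only the j < 0 with j \in T (i.e. -(2n-1) \notin S) give nonzero terms,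
   so the sum is restricted to those (finitely many) j. *)
Definition Q (x : DH C) : DH C :=
  \sum_(b <- msupp x) \sum_(j <- b.2 | j < 0)
     dmul `|(j + 1)%R|%N (psi j << x@_b *g b >>).

End Ops.

From HB Require Import structures.
From mathcomp Require Import all_boot all_order all_algebra.
From mathcomp Require Import finmap multiset.
From mathcomp Require Import monalg.
From mathcomp Require Import complex reals.
From mathcomp Require Import zify ring.
Import Order.TTheory GRing.Theory Num.Theory.
Local Open Scope ring_scope.
Set Implicit Arguments. Unset Strict Implicit. Unset Printing Implicit Defensive.

(* [D (x) H^*] is a Koszul complex: a basis vector [m (x) <S|] is a monomial
   [m] in the [d_(2i+1)] times a wedge of "holes" [-(2i+1) \notin S], and [Q]
   fills a hole [-(2i+1)] while multiplying by [d_(2i+1)].  The operator [h]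
   that empties an occupied [-(2i+1)] while differentiating in [d_(2i+1)]
   satisfies [Q h + h Q = w], where [w] counts the total degree in the
   variables plus the number of holes.  On a sector of negative charge there
   is at least one hole, so [w] is invertible there and [w^-1 h] is a
   contracting homotopy; together with [Q^2 = 0] this gives exactness. *)

Section LinearExtension.
Variables (C : nzRingType) (K : choiceType) (V : lmodType C).

Definition linext (f : K -> V) (x : {malg C[K]}) : V :=
  \sum_(b <- msupp x) x@_b *: f b.

Lemma linextEw f (d : {fset K}) x : (msupp x `<=` d)%fset ->
  linext f x = \sum_(b <- d) x@_b *: f b.
Proof.
move=> sub; rewrite /linext (big_fset_incl _ sub) // => b _ nb.
by rewrite mcoeff_outdom // scale0r.
Qed.

Lemma linext_is_linear f : linear (linext f).
Proof.
move=> c x y; set d := (msupp x `|` msupp y)%fset.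
have sx : (msupp x `<=` d)%fset by exact: fsubsetUl.
have sy : (msupp y `<=` d)%fset by exact: fsubsetUr.
have sxy : (msupp (c *: x + y) `<=` d)%fset.
  by apply: fsubset_trans (msuppD_le _ _) _; apply: fsetSU; exact: msuppZ_le.
rewrite (linextEw _ sxy) (linextEw _ sx) (linextEw _ sy).
rewrite scaler_sumr -big_split; apply: eq_bigr => b _.
by rewrite mcoeffD mcoeffZ scalerDl scalerA.
Qed.

HB.instance Definition _ f :=
  GRing.isLinear.Build C {malg C[K]} V _ (linext f) (linext_is_linear f).

Lemma linextU f c b : linext f << c *g b >> = c *: f b.
Proof. by rewrite (linextEw _ msuppU_le) big_seq_fset1 mcoeffUU. Qed.

Lemma eq_in_linext f g x : {in msupp x, f =1 g} -> linext f x = linext g x.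
Proof. by move=> fg; apply: eq_big_seq => b /fg ->. Qed.

Lemma linext_add_fun f g x : linext (fun b => f b + g b) x = linext f x + linext g x.
Proof. by rewrite /linext -big_split; apply: eq_bigr => b _; rewrite scalerDr. Qed.

End LinearExtension.

Lemma scale_malgU (C : nzRingType) (K : choiceType) (c : C) (b : K) :
  c *: (<< b >> : {malg C[K]}) = << c *g b >>.
Proof. by apply/malgP => k; rewrite mcoeffZ !mcoeffU; case: eqP; rewrite ?mulr1 ?mulr0. Qed.

Lemma linext_basis (C : nzRingType) (K : choiceType) (x : {malg C[K]}) :
  linext (fun b => << b >>) x = x.
Proof. by rewrite {2}(monalgE x); apply: eq_bigr => b _; exact: scale_malgU. Qed.

Lemma linext_comp (C : nzRingType) (K K' : choiceType) (V : lmodType C)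
    (f : K -> V) (g : K' -> {malg C[K]}) x :
  linext f (linext g x) = linext (fun b => linext f (g b)) x.
Proof. by rewrite [linext g x]/linext linear_sum; apply: eq_bigr => b _; rewrite linearZ. Qed.

Section Sectors.
Variables (C : nzRingType) (m : int).
Implicit Types x y : DH C.

Lemma in_sector0 : in_sector m (0 : DH C).
Proof. by move=> b; rewrite msupp0. Qed.

Lemma in_sectorD x y : in_sector m x -> in_sector m y -> in_sector m (x + y).
Proof.
by move=> hx hy b /(fsubsetP (msuppD_le x y)); rewrite in_fsetU => /orP[/hx|/hy].
Qed.

Lemma in_sectorZ c x : in_sector m x -> in_sector m (c *: x).
Proof. by move=> hx b /(fsubsetP (msuppZ_le c x)) /hx. Qed.

Lemma in_sector_sum I (s : seq I) (P : pred I) (F : I -> DH C) :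
  (forall i, P i -> in_sector m (F i)) -> in_sector m (\sum_(i <- s | P i) F i).
Proof. by move=> h; elim/big_ind: _ => //; [exact: in_sector0 | exact: in_sectorD]. Qed.

Lemma in_sectorU c b : 2 * charge b.2 - 1 = m -> in_sector m (<< c *g b >> : DH C).
Proof. by move=> e k /(fsubsetP msuppU_le); rewrite inE => /eqP ->. Qed.

Lemma in_sector_linext f x :
  (forall b, b \in msupp x -> in_sector m (f b)) -> in_sector m (linext f x).
Proof.
by move=> h; rewrite /linext big_seq; apply: in_sector_sum => b /h; exact: in_sectorZ.
Qed.

End Sectors.

(* [Negz i = -(i+1)] indexes the odd number [-(2i+1)], whose hole is filled
   by [Q] together with the variable [d_(2i+1)], of index [i]. *)

Lemma Negz_inj : injective Negz.
Proof. by move=> a b []. Qed.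

Lemma absz_Negz_add1 i : `|(Negz i + 1)%R|%N = i.
Proof. by rewrite NegzE (_ : _ + 1 = - i%:Z) ?abszN ?absz_nat //; lia. Qed.

Section States.
Implicit Types T : state.

Lemma in_toggle T j x : (x \in toggle T j) = (x == j) (+) (x \in T).
Proof.
rewrite /toggle; case: ifP => jT; rewrite !inE; case: (eqVneq x j) => [->|] //=.
all: by rewrite jT.
Qed.

Lemma toggleC T j k : toggle (toggle T j) k = toggle (toggle T k) j.
Proof. by apply/fsetP => x; rewrite !in_toggle addbCA. Qed.

Lemma toggleK T j : toggle (toggle T j) j = T.
Proof. by apply/fsetP => x; rewrite !in_toggle addbA addbb. Qed.

Lemma occupied_toggle T j y : occupied (toggle T j) y = occupied T y (+) (y == j).
Proof. by rewrite /occupied in_toggle; case: (y == j); case: (y \in T); case: (y < 0). Qed.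

Definition card_pos T := #|` [fset x in T | (0 <= x)%R]%fset|.

Lemma card_pos_toggle T a : card_pos (toggle T (Negz a)) = card_pos T.
Proof.
rewrite /card_pos; congr #|` _|; apply/fsetP => x; rewrite !inE in_toggle.
by case: (eqVneq x (Negz a)) => [->|_] //=; rewrite !andbF.
Qed.

Lemma occ_above_Negz T i : occ_above T (Negz i) =
  (card_pos T + count (fun k : nat => occupied T (Negz i + 1 + k%:Z)) (iota 0 i))%N.
Proof.
rewrite /occ_above /card_pos absz_Negz_add1; congr (#|` _| + _)%N.
apply/fsetP => x; rewrite !inE; case: (x \in T) => //=.
by case: (boolP (0 <= x)) => h; rewrite ?andbF ?andbT //; apply: lt_le_trans h.
Qed.

Lemma count_Negz_eq a i :
  count (fun k : nat => Negz i + 1 + k%:Z == Negz a) (iota 0 i) = (a < i)%N.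
Proof.
case: (ltnP a i) => ai.
  rewrite (@eq_in_count _ _ (pred1 (i - a.+1)%N)).
    by rewrite (count_uniq_mem _ (iota_uniq 0 i)) mem_iota /=; apply/eqP; lia.
  by move=> k; rewrite mem_iota => /andP[_ ki] /=; apply/eqP/eqP; rewrite !NegzE; lia.
rewrite (@eq_in_count _ _ pred0) ?count_pred0 //.
by move=> k; rewrite mem_iota => /andP[_ ki] /=; apply/eqP; rewrite !NegzE; lia.
Qed.

Lemma charge_toggle T a :
  charge (toggle T (Negz a)) = charge T + (if Negz a \in T then 1 else -1).
Proof.
rewrite /charge; fold (card_pos (toggle T (Negz a))) (card_pos T); rewrite card_pos_toggle.
case: (boolP (Negz a \in T)) => aT.
  have -> : [fset x in toggle T (Negz a) | (x < 0)%R]%fset =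
            ([fset x in T | (x < 0)%R] `\ Negz a)%fset.
    apply/fsetP => x; rewrite !inE in_toggle.
    by case: (eqVneq x (Negz a)) => [->|_] //=; rewrite aT.
  by have := cardfsD1 (Negz a) [fset x in T | (x < 0)%R]%fset; rewrite !inE aT /= => ->; lia.
have -> : [fset x in toggle T (Negz a) | (x < 0)%R]%fset =
          (Negz a |` [fset x in T | (x < 0)%R])%fset.
  apply/fsetP => x; rewrite !inE in_toggle.
  by case: (eqVneq x (Negz a)) => [->|_] //=; rewrite (negbTE aT).
by rewrite cardfsU1 !inE (negbTE aT) /=; lia.
Qed.

End States.

Lemma odd_count_addb (I : Type) (p q : pred I) s :
  odd (count (fun i => p i (+) q i) s) = odd (count p s) (+) odd (count q s).
Proof.
elim: s => //= x s IH; rewrite !oddD IH !oddb.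
by case: (p x); case: (q x); case: (odd (count p s)); case: (odd (count q s)).
Qed.

Section Signs.
Variable C : nzRingType.

Definition psi_sign (T : state) (i : nat) : C := (-1) ^+ occ_above T (Negz i).

Lemma psi_sign_toggle T a i :
  psi_sign (toggle T (Negz a)) i = (if (a < i)%N then -1 else 1) * psi_sign T i.
Proof.
rewrite /psi_sign !occ_above_Negz card_pos_toggle.
under eq_count => k do rewrite occupied_toggle.
rewrite -signr_odd -[in RHS]signr_odd !oddD odd_count_addb count_Negz_eq oddb.
rewrite !signr_addb; case: (a < i)%N; rewrite /= ?expr0 ?mulr1 ?mul1r //.
by rewrite expr1 mulrN1 mulN1r mulrN.
Qed.

Lemma psi_sign_mul_self T i : psi_sign T i * psi_sign T i = 1.
Proof. by rewrite /psi_sign -exprD -signr_odd oddD addbb. Qed.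

End Signs.

Definition bounded (N : nat) (b : basis) :=
  forall i, (N <= i)%N -> b.1 i = 0%N /\ Negz i \notin b.2.

Definition bound (b : basis) : nat :=
  maxn (\max_(i <- finsupp b.1) i).+1 (\max_(x <- b.2) `|x|%N).

Lemma bound_bounded b : bounded (bound b) b.
Proof.
move=> i hi; split.
  case: (eqVneq (b.1 i) 0%N) => // bi.
  have ib : i \in finsupp b.1 by rewrite mem_finsupp.
  have : (i <= \max_(k <- finsupp b.1) k)%N by exact: (leq_bigmax_seq (F := fun k => k)).
  by move: hi; rewrite /bound; lia.
apply/negP => bi.
have : (`|Negz i|%N <= \max_(x <- b.2) `|x|%N)%N.
  exact: (leq_bigmax_seq (F := fun x : int => `|x|%N)).
by move: hi; rewrite /bound /=; lia.
Qed.

Lemma bounded_fill N b i : bounded N b -> (i < N)%N ->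
  bounded N ((i +` b.1)%mset, toggle b.2 (Negz i)).
Proof.
move=> bN iN k Nk; have [b1k b2k] := bN k Nk; split => /=.
  by rewrite mset1DE b1k; case: eqP => // e; move: iN Nk; lia.
by rewrite in_toggle (inj_eq Negz_inj) (negbTE b2k); apply/eqP; move: iN Nk; lia.
Qed.

Lemma bounded_empty N b i : bounded N b -> (i < N)%N ->
  bounded N ((b.1 `\ i)%mset, toggle b.2 (Negz i)).
Proof.
move=> bN iN k Nk; have [b1k b2k] := bN k Nk; split => /=.
  by rewrite msetB1E b1k.
by rewrite in_toggle (inj_eq Negz_inj) (negbTE b2k); apply/eqP; move: iN Nk; lia.
Qed.

Lemma big_negative_state (V : zmodType) (T : state) N (F : int -> V) :
  (forall i, (N <= i)%N -> Negz i \notin T) ->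
  \sum_(j <- T | (j < 0)%R) F j =
  \sum_(0 <= i < N) (if Negz i \in T then F (Negz i) else 0).
Proof.
move=> hT; rewrite -big_filter -[RHS]big_mkcond /= -[RHS]big_filter.
rewrite -(big_map Negz xpredT F); apply: perm_big; apply: uniq_perm.
- exact/filter_uniq/fset_uniq.
- by rewrite (map_inj_uniq Negz_inj); apply/filter_uniq/iota_uniq.
case=> [k|k]; rewrite mem_filter.
  by rewrite andFb; apply/esym/negP => /mapP[].
rewrite /= (mem_map Negz_inj) mem_filter mem_index_iota /=.
case: (boolP (Negz k \in T)) => //= kT.
by case: (ltnP k N) => // Nk; move: (hT k Nk); rewrite kT.
Qed.

Lemma sum_alternating0 (V : zmodType) N (F : nat -> nat -> V) :
  (forall i, F i i = 0) -> (forall i j, F i j = - F j i) ->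
  \sum_(0 <= i < N) \sum_(0 <= j < N) F i j = 0.
Proof.
move=> F0 FN; elim: N => [|N IH]; first by rewrite big_geq.
under eq_bigr => i _ do rewrite big_nat_recr //=.
rewrite big_split /= big_nat_recr //= IH add0r [X in _ + X]big_nat_recr //= F0 addr0.
by rewrite -big_split /= big1 // => i _; rewrite FN addNr.
Qed.

Definition weight_upto (N : nat) (b : basis) : nat :=
  \sum_(0 <= i < N) (b.1 i + (Negz i \in b.2))%N.

Definition weight (b : basis) : nat := weight_upto (bound b) b.

Lemma weight_upto_widen N N' b : bounded N b -> (N <= N')%N ->
  weight_upto N' b = weight_upto N b.
Proof.
move=> bN le; rewrite /weight_upto (big_cat_nat (leq0n N) le) /=.
rewrite [X in (_ + X)%N]big1_seq ?addn0 // => i /andP[_].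
by rewrite mem_index_iota => /andP[Ni _]; have [-> /negbTE ->] := bN i Ni.
Qed.

Lemma weight_bounded N b : bounded N b -> weight b = weight_upto N b.
Proof.
move=> bN; rewrite /weight -(@weight_upto_widen _ (maxn N (bound b))) ?leq_maxr //.
  by rewrite (@weight_upto_widen N) ?leq_maxl.
exact: bound_bounded.
Qed.

Lemma weight_fill b i : Negz i \in b.2 -> (i < bound b)%N ->
  weight ((i +` b.1)%mset, toggle b.2 (Negz i)) = weight b.
Proof.
case: b => m T /= iT iN.
rewrite (weight_bounded (bounded_fill (@bound_bounded (m, T)) iN)).
apply: eq_big_nat => k _ /=; rewrite mset1DE in_toggle (inj_eq Negz_inj).
by case: (eqVneq k i) => [->|_] /=; [rewrite iT /=|]; lia.
Qed.

Lemma weight_gt0 b : (charge b.2 < 0)%R -> (0 < weight b)%N.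
Proof.
case: b => m T /= hc.
have [x xT xneg] : exists2 x, x \in T & (x < 0)%R.
  case: (boolP ([fset x in T | (x < 0)%R]%fset == fset0)) => [/eqP E|/fset0Pn[x]].
    by move: hc; rewrite /charge E cardfs0; lia.
  by rewrite inE => /andP[xT xn]; exists x.
case: x xT xneg => [k|k] kT kn; first by move: kn; lia.
have kN : (k < bound (m, T))%N.
  by rewrite ltnNge; apply/negP => /(@bound_bounded (m, T)) [_]; rewrite kT.
rewrite /weight /weight_upto (bigD1_seq k) ?mem_index_iota ?iota_uniq //=.
by rewrite kT addn1.
Qed.

Section KoszulHomotopy.
Variable C : comNzRingType.
Local Notation M := {malg C[basis]}.
Local Notation sign := (@psi_sign C).

Lemma psiU j c (b : basis) : psi j (<< c *g b >> : M) =
  if occupied b.2 j then 0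
  else << ((-1) ^+ occ_above b.2 j * c) *g (b.1, toggle b.2 j) >>.
Proof.
rewrite /psi msuppU; case: eqP => [->|_].
  by rewrite big_nil mulr0 monalgU0; case: ifP.
by rewrite big_seq_fset1 mcoeffUU.
Qed.

Lemma dmulU k c (b : basis) : dmul k (<< c *g b >> : M) = << c *g ((k +` b.1)%mset, b.2) >>.
Proof.
rewrite /dmul msuppU; case: eqP => [->|_]; first by rewrite big_nil monalgU0.
by rewrite big_seq_fset1 mcoeffUU.
Qed.

Definition Qb (b : basis) : M :=
  \sum_(j <- b.2 | (j < 0)%R)
     (-1) ^+ occ_above b.2 j *: << ((`|(j + 1)%R|%N +` b.1)%mset, toggle b.2 j) >>.

Lemma Q_linext (x : M) : Q x = linext Qb x.
Proof.
rewrite /Q /linext; apply: eq_bigr => b _.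
rewrite /Qb scaler_sumr [LHS]big_seq_cond; symmetry; rewrite [LHS]big_seq_cond.
apply: eq_bigr => j /andP[jT jn].
have oc : occupied b.2 j = false by rewrite /occupied jT jn.
by rewrite psiU oc dmulU scalerA scale_malgU mulrC.
Qed.

Definition Qb_upto (N : nat) (b : basis) : M :=
  \sum_(0 <= i < N) (if Negz i \in b.2 then
     sign b.2 i *: << ((i +` b.1)%mset, toggle b.2 (Negz i)) >> else 0).

Lemma Qb_bounded N b : bounded N b -> Qb b = Qb_upto N b.
Proof.
move=> bN; rewrite /Qb (big_negative_state _ (N := N)); last by move=> i /bN[].
by apply: eq_bigr => i _; rewrite absz_Negz_add1.
Qed.

Definition hb_upto (N : nat) (b : basis) : M :=
  \sum_(0 <= i < N) (if Negz i \in b.2 then 0 else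
     ((b.1 i)%:R * sign b.2 i) *: << ((b.1 `\ i)%mset, toggle b.2 (Negz i)) >>).

Definition hb (b : basis) : M := hb_upto (bound b) b.

Lemma hb_upto_widen N N' b : bounded N b -> (N <= N')%N -> hb_upto N' b = hb_upto N b.
Proof.
move=> bN le; rewrite /hb_upto (big_cat_nat (leq0n N) le) /=.
rewrite [X in _ + X]big1_seq ?addr0 // => i /andP[_].
rewrite mem_index_iota => /andP[Ni _]; have [-> _] := bN i Ni.
by case: (Negz i \in b.2); rewrite ?mul0r ?scale0r.
Qed.

Lemma hb_bounded N b : bounded N b -> hb b = hb_upto N b.
Proof.
move=> bN; rewrite /hb -(@hb_upto_widen _ (maxn N (bound b))) ?leq_maxr //.
  by rewrite (@hb_upto_widen N) ?leq_maxl.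
exact: bound_bounded.
Qed.

Definition QQ_term (m : {mset nat}%mset) (T : state) (i i' : nat) : M :=
  if Negz i \in T then
    (if Negz i' \in toggle T (Negz i) then
      (sign T i * sign (toggle T (Negz i)) i') *:
        << ((i' +` (i +` m))%mset, toggle (toggle T (Negz i)) (Negz i')) >>
     else 0)
  else 0.

Lemma QQ_term_diag m T i : QQ_term m T i i = 0.
Proof. by rewrite /QQ_term in_toggle eqxx; case: (Negz i \in T). Qed.

(* the anticommutation [psi_a psi_b = - psi_b psi_a] *)
Lemma QQ_term_antisym m T i i' : QQ_term m T i i' = - QQ_term m T i' i.
Proof.
case: (eqVneq i i') => [<-|ne]; first by rewrite QQ_term_diag oppr0.
rewrite /QQ_term !in_toggle !(inj_eq Negz_inj) (negbTE ne) eq_sym (negbTE ne) /=.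
case: (Negz i \in T); case: (Negz i' \in T); rewrite /= ?oppr0 //.
have e : sign T i * sign (toggle T (Negz i)) i' =
          - (sign T i' * sign (toggle T (Negz i')) i).
  by rewrite !psi_sign_toggle; case: (ltngtP i i') ne => // _ _; ring.
by rewrite msetDCA toggleC e scaleNr.
Qed.

Lemma Qb_Qb b : linext Qb (Qb b) = 0.
Proof.
case: b => m T; have bb := @bound_bounded (m, T).
rewrite (Qb_bounded bb) linear_sum -[RHS](sum_alternating0 (bound (m, T))
  (QQ_term_diag m T) (QQ_term_antisym m T)).
apply: eq_big_nat => i /andP[_ iN] /=; rewrite /QQ_term.
case: (boolP (Negz i \in T)) => iT; last by rewrite linear0 big1.
rewrite linearZ /= linextU scale1r (Qb_bounded (bounded_fill bb iN)) scaler_sumr /=.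
apply: eq_bigr => i' _.
by case: (Negz i' \in toggle T (Negz i)); [rewrite scalerA | rewrite scaler0].
Qed.

Definition Qh_term (m : {mset nat}%mset) (T : state) (i i' : nat) : M :=
  if Negz i \in T then 0 else
  if Negz i' \in toggle T (Negz i) then
    ((m i)%:R * sign T i * sign (toggle T (Negz i)) i') *:
      << ((i' +` (m `\ i))%mset, toggle (toggle T (Negz i)) (Negz i')) >>
  else 0.

Definition hQ_term (m : {mset nat}%mset) (T : state) (i' i : nat) : M :=
  if Negz i' \in T then
    (if Negz i \in toggle T (Negz i') then 0 else
      (sign T i' * (((i' +` m)%mset i)%:R * sign (toggle T (Negz i')) i)) *:
        << (((i' +` m) `\ i)%mset, toggle (toggle T (Negz i')) (Negz i)) >>)
  else 0.

(* termwise form of [[d_(2i+1), partial_(2i'+1)] = delta_(i,i')] and of the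
   fermionic anticommutator [[psi_(-(2i+1)), psi*_(-(2i'+1))]_+ = delta_(i,i')] *)
Lemma Qh_hQ_term m T i i' : Qh_term m T i i' + hQ_term m T i' i =
  if i == i' then ((m i + (Negz i \in T))%N)%:R *: << (m, T) >> else 0.
Proof.
rewrite /Qh_term /hQ_term; case: (eqVneq i i') => [<-|ne].
  rewrite !in_toggle eqxx /=; case: (boolP (Negz i \in T)) => iT /=.
    rewrite add0r psi_sign_toggle ltnn mul1r mulrCA psi_sign_mul_self mulr1.
    by rewrite mset1DE eqxx msetD1K toggleK addnC.
  rewrite addr0 psi_sign_toggle ltnn mul1r -mulrA psi_sign_mul_self mulr1 toggleK addn0.
  case: (eqVneq (m i) 0%N) => [mi0|mi]; last by rewrite msetB1K // -mset_neq0.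
  have -> : (m i)%:R = 0 :> C by rewrite mi0.
  by rewrite [LHS]scale0r [RHS]scale0r.
rewrite !in_toggle !(inj_eq Negz_inj) (negbTE ne) eq_sym (negbTE ne) /=.
case: (Negz i \in T); case: (Negz i' \in T); rewrite /= ?addr0 ?add0r //.
have -> : ((i' +` (m `\ i))%mset, toggle (toggle T (Negz i)) (Negz i')) =
          (((i' +` m) `\ i)%mset, toggle (toggle T (Negz i')) (Negz i)).
  congr pair; last exact: toggleC.
  apply/msetP => k; rewrite !(mset1DE, msetB1E).
  by case: (eqVneq k i) => [->|ki]; rewrite /= ?(negbTE ne) ?add0n ?subn0.
rewrite -scalerDl mset1DE (negbTE ne) add0n !psi_sign_toggle.
set c := (X in X *: _); suff -> : c = 0 by rewrite scale0r.
by rewrite /c; case: (ltngtP i i') ne => // _ _; ring.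
Qed.

Lemma Qb_hb_homotopy b : linext Qb (hb b) + linext hb (Qb b) = (weight b)%:R *: << b >>.
Proof.
case: b => m T; set N := bound (m, T); have bb := @bound_bounded (m, T).
rewrite (hb_bounded bb) (Qb_bounded bb) !linear_sum.
transitivity (\sum_(0 <= i < N) \sum_(0 <= i' < N) Qh_term m T i i'
   + \sum_(0 <= i' < N) \sum_(0 <= i < N) hQ_term m T i' i).
  congr (_ + _); apply: eq_big_nat => i /andP[_ iN] /=; rewrite /Qh_term /hQ_term.
    case: (boolP (Negz i \in T)) => iT; first by rewrite linear0 big1.
    rewrite linearZ /= linextU scale1r (Qb_bounded (bounded_empty bb iN)) scaler_sumr.
    apply: eq_bigr => i' _.
    by case: (Negz i' \in toggle T (Negz i)); [rewrite scalerA | rewrite scaler0].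
  case: (boolP (Negz i \in T)) => iT; last by rewrite linear0 big1.
  rewrite linearZ /= linextU scale1r (hb_bounded (bounded_fill bb iN)) scaler_sumr.
  apply: eq_bigr => i' _.
  by case: (Negz i' \in toggle T (Negz i)); [rewrite scaler0 | rewrite scalerA].
rewrite [X in _ + X]exchange_big -big_split /= (weight_bounded bb).
rewrite /weight_upto natr_sum scaler_suml; apply: eq_big_nat => i /andP[_ iN].
rewrite -big_split /=; under eq_bigr => i' _ do rewrite Qh_hQ_term eq_sym.
by rewrite -big_mkcond big_nat1_eq iN.
Qed.

Lemma linext_Qb_weighted (g : nat -> C) (f : basis -> M) b :
  linext (fun b' => g (weight b') *: f b') (Qb b) = g (weight b) *: linext f (Qb b).
Proof.
case: b => m T; have bb := @bound_bounded (m, T).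
rewrite (Qb_bounded bb) [LHS]linear_sum [X in _ *: X]linear_sum scaler_sumr.
apply: eq_big_nat => i /andP[_ iN].
case: (boolP (Negz i \in T)) => iT; last by rewrite [LHS]linear0 [X in _ *: X]linear0 scaler0.
rewrite !linearZ /= !linextU (@weight_fill (m, T) i iT iN).
by rewrite !scale1r !scalerA mulrC.
Qed.

Lemma in_sector_hb b (k : int) : 2 * charge b.2 - 1 = k + 2 -> in_sector k (hb b).
Proof.
case: b => m T e; rewrite (hb_bounded (@bound_bounded (m, T))).
apply: in_sector_sum => i _; case: (boolP (Negz i \in T)) => iT.
  exact: in_sector0.
apply/in_sectorZ/in_sectorU; move: e; rewrite /= charge_toggle (negbTE iT); lia.
Qed.

End KoszulHomotopy.

Lemma Q_Q (C : comNzRingType) (x : DH C) : Q (Q x) = 0.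
Proof.
by rewrite !Q_linext linext_comp {1}/linext big1 // => b _; rewrite Qb_Qb scaler0.
Qed.

Section Exactness.
Variable C : numFieldType.
Local Notation M := {malg C[basis]}.

Definition Qhomotopy (x : M) : M := linext (fun b => ((weight b)%:R)^-1 *: hb C b) x.

Lemma Q_Qhomotopy (x : M) : {in msupp x, forall b, weight b != 0%N} ->
  Q (Qhomotopy x) + Qhomotopy (Q x) = x.
Proof.
move=> wx; rewrite !Q_linext /Qhomotopy !linext_comp -linext_add_fun.
rewrite -[RHS]linext_basis; apply: eq_in_linext => b /wx wb.
rewrite linearZ /= (linext_Qb_weighted (fun k => (k%:R)^-1)) -scalerDr Qb_hb_homotopy.
by rewrite scalerA mulVf ?scale1r // pnatr_eq0.
Qed.

Lemma in_sector_Qhomotopy (m : int) (x : M) : in_sector (m + 2) x -> in_sector m (Qhomotopy x).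
Proof. by move=> hx; apply: in_sector_linext => b bx; apply/in_sectorZ/in_sector_hb/hx. Qed.

End Exactness.

Theorem lemma1 (R : realType) (n : nat) :
  (1 <= n)%N ->
  forall x : DH R[i],
    in_sector (- (2 * n%:Z + 1)) x ->
    (Q x = 0 <-> exists y : DH R[i], in_sector (- (2 * n%:Z + 3)) y /\ Q y = x).
Proof.
move=> n_gt0 x hx; split=> [Qx0 | [y [_ <-]]]; last exact: Q_Q.
exists (Qhomotopy x); split.
  by apply: in_sector_Qhomotopy => b /hx ->; lia.
have wx : {in msupp x, forall b, weight b != 0%N}.
  by move=> [m T] /hx /= hb; rewrite -lt0n weight_gt0 //=; lia.
by rewrite -[RHS](Q_Qhomotopy wx) Qx0 [Qhomotopy 0]linear0 addr0.
Qed.
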